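(* Let $H$ be a finitely presented Heyting algebra, let $H[x]$ be the coproduct in the category of Heyting algebras of $H$ with the free Heyting algebra on one generator $x$, let $i_x:H\to H[x]$ be the canonical inclusion, and let $\exists_x:H[x]\to H$ be a left adjoint of $i_x$ (i.e. $\exists_x.f\le h$ iff $f\le i_x(h)$). Let $f\in H[x]$ be monotone. Then the map $h\mapsto f(h)$ on $H$ has a greatest fixed point, equal to $\exists_x.(x\wedge(x\to f))$.
   Context: For $h_0\in H$, $f(h_0)$ denotes the image of $f$ under the unique Heyting algebra morphism $H[x]\to H$ that is the identity on $H$ and sends $x$ to $h_0$. $f\in H[x]$ is monotone if $h_0\le h_1$ implies $f(h_0)\le f(h_1)$. Elements of $H$ are identified with their images under $i_x$. *)

From Stdlib Require Import List.

Set Implicit Arguments.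

Record HeytingAlgebra := {
  ha_car :> Type;
  ha_le : ha_car -> ha_car -> Prop;
  ha_top : ha_car;
  ha_bot : ha_car;
  ha_meet : ha_car -> ha_car -> ha_car;
  ha_join : ha_car -> ha_car -> ha_car;
  ha_imp : ha_car -> ha_car -> ha_car;
  ha_le_refl : forall a, ha_le a a;
  ha_le_trans : forall a b c, ha_le a b -> ha_le b c -> ha_le a c;
  ha_le_antisym : forall a b, ha_le a b -> ha_le b a -> a = b;
  ha_top_max : forall a, ha_le a ha_top;
  ha_bot_min : forall a, ha_le ha_bot a;
  ha_meet_glb : forall a b c, ha_le c (ha_meet a b) <-> (ha_le c a /\ ha_le c b);
  ha_join_lub : forall a b c, ha_le (ha_join a b) c <-> (ha_le a c /\ ha_le b c);
  ha_imp_adj : forall a b c, ha_le (ha_meet c a) b <-> ha_le c (ha_imp a b)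
}.

Arguments ha_le {h}.
Arguments ha_top {h}.
Arguments ha_bot {h}.
Arguments ha_meet {h}.
Arguments ha_join {h}.
Arguments ha_imp {h}.

Definition ha_morphism (A B : HeytingAlgebra) (f : A -> B) : Prop :=
  f ha_top = ha_top /\ f ha_bot = ha_bot /\
  (forall a b, f (ha_meet a b) = ha_meet (f a) (f b)) /\
  (forall a b, f (ha_join a b) = ha_join (f a) (f b)) /\
  (forall a b, f (ha_imp a b) = ha_imp (f a) (f b)).

Arguments ha_morphism {A B} f.

Inductive hterm (V : Type) : Type :=
| HVar : V -> hterm V
| HTop : hterm V
| HBot : hterm V
| HMeet : hterm V -> hterm V -> hterm V
| HJoin : hterm V -> hterm V -> hterm V
| HImp : hterm V -> hterm V -> hterm V.

Fixpoint heval (V : Type) (K : HeytingAlgebra) (v : V -> K) (t : hterm V) : K :=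
  match t with
  | HVar a => v a
  | HTop _ => ha_top
  | HBot _ => ha_bot
  | HMeet t1 t2 => ha_meet (@heval V K v t1) (@heval V K v t2)
  | HJoin t1 t2 => ha_join (@heval V K v t1) (@heval V K v t2)
  | HImp t1 t2 => ha_imp (@heval V K v t1) (@heval V K v t2)
  end.

Arguments heval {V K} v t.

Definition satisfies (V : Type) (K : HeytingAlgebra) (v : V -> K)
    (rels : list (hterm V * hterm V)) : Prop :=
  forall r, In r rels -> heval v (fst r) = heval v (snd r).

Arguments satisfies {V K} v rels.

Definition finitely_presented (H : HeytingAlgebra) : Prop :=
  exists (n : nat) (gen : {i : nat | i < n} -> H)
         (rels : list (hterm {i : nat | i < n} * hterm {i : nat | i < n})),
    satisfies gen rels /\
    forall (K : HeytingAlgebra) (v : {i : nat | i < n} -> K),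
      satisfies v rels ->
      (exists phi : H -> K, ha_morphism phi /\ forall i, phi (gen i) = v i) /\
      (forall phi psi : H -> K, ha_morphism phi -> ha_morphism psi ->
         (forall i, phi (gen i) = v i) -> (forall i, psi (gen i) = v i) ->
         forall a, phi a = psi a).

(** (Hx, i, x) is the coproduct of H with the free Heyting algebra on one
    generator x, i being the canonical inclusion: morphisms out of the free
    algebra on one generator correspond to elements, so the universal
    property reads as follows. *)
Definition is_coproduct_free1 (H Hx : HeytingAlgebra) (i : H -> Hx) (x : Hx)
  : Prop :=
  ha_morphism i /\
  forall (K : HeytingAlgebra) (g : H -> K) (k : K), ha_morphism g ->
    (exists e : Hx -> K, ha_morphism e /\ (forall h, e (i h) = g h) /\ e x = k) /\
    (forall e1 e2 : Hx -> K,
       ha_morphism e1 -> (forall h, e1 (i h) = g h) -> e1 x = k ->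
       ha_morphism e2 -> (forall h, e2 (i h) = g h) -> e2 x = k ->
       forall y, e1 y = e2 y).

(** [e] is the (unique) morphism H[x] -> H that is the identity on H and
    sends x to h0; so f(h0) = e f. *)
Definition is_subst (H Hx : HeytingAlgebra) (i : H -> Hx) (x : Hx) (h0 : H)
    (e : Hx -> H) : Prop :=
  ha_morphism e /\ (forall h, e (i h) = h) /\ e x = h0.

Arguments is_subst {H Hx} i x h0 e.

Definition monotone_poly (H Hx : HeytingAlgebra) (i : H -> Hx) (x : Hx)
    (f : Hx) : Prop :=
  forall h0 h1 : H, ha_le h0 h1 ->
    forall e0 e1, is_subst i x h0 e0 -> is_subst i x h1 e1 ->
      ha_le (e0 f) (e1 f).

Arguments monotone_poly {H Hx} i x f.
Arguments is_coproduct_free1 {H Hx} i x.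

From Stdlib Require Import ProofIrrelevance.

(* Write q := x /\ (x -> f) and g := ex q.  Every post-fixed point h <= f(h)
   lies below g: substituting h for x sends q to h /\ (h -> f(h)) = h, and it
   sends q below g since q <= i g.  Conversely, below q the element x
   coincides with i g, so by uniqueness in the coproduct (applied in the
   Heyting algebra of elements below q) the identity of H[x] and the map
   p |-> i (p(g)) agree below q; as q <= f this gives q <= i (f(g)), i.e.
   g <= f(g).  Monotonicity then makes f(g) a post-fixed point, hence
   f(g) <= g. *)

Section HeytingLattice.
Context {A : HeytingAlgebra}.
Implicit Types a b c : A.

Lemma leIl a b : ha_le (ha_meet a b) a.
Proof. exact (proj1 (proj1 (ha_meet_glb A a b _) (ha_le_refl A _))). Qed.

Lemma leIr a b : ha_le (ha_meet a b) b.
Proof. exact (proj2 (proj1 (ha_meet_glb A a b _) (ha_le_refl A _))). Qed.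

Lemma lexI a b c : ha_le c a -> ha_le c b -> ha_le c (ha_meet a b).
Proof. intros; apply ha_meet_glb; auto. Qed.

Lemma leUl a b : ha_le a (ha_join a b).
Proof. exact (proj1 (proj1 (ha_join_lub A a b _) (ha_le_refl A _))). Qed.

Lemma leUr a b : ha_le b (ha_join a b).
Proof. exact (proj2 (proj1 (ha_join_lub A a b _) (ha_le_refl A _))). Qed.

Lemma leUx a b c : ha_le a c -> ha_le b c -> ha_le (ha_join a b) c.
Proof. intros; apply ha_join_lub; auto. Qed.

Lemma le_impI a b c : ha_le (ha_meet c a) b -> ha_le c (ha_imp a b).
Proof. apply ha_imp_adj. Qed.

Lemma modus_ponens a b : ha_le (ha_meet (ha_imp a b) a) b.
Proof. apply ha_imp_adj, ha_le_refl. Qed.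

Lemma meet_l a b : ha_le a b -> ha_meet a b = a.
Proof. intros; apply ha_le_antisym; [apply leIl | apply lexI; auto using ha_le_refl]. Qed.

Lemma meetUr a b c :
  ha_meet a (ha_join b c) = ha_join (ha_meet a b) (ha_meet a c).
Proof.
apply ha_le_antisym.
- assert (Hbc : ha_le (ha_join b c)
                  (ha_imp a (ha_join (ha_meet a b) (ha_meet a c)))).
  { apply leUx; apply le_impI.
    - eapply ha_le_trans; [|apply leUl]. apply lexI; [apply leIr | apply leIl].
    - eapply ha_le_trans; [|apply leUr]. apply lexI; [apply leIr | apply leIl]. }
  eapply ha_le_trans; [|apply (modus_ponens a)].
  apply lexI; [eapply ha_le_trans; [apply leIr | exact Hbc] | apply leIl].
- apply leUx; apply lexI; try apply leIl;
    (eapply ha_le_trans; [apply leIr | apply leUl || apply leUr]).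
Qed.

Lemma meet_imp_relative a b c :
  ha_meet a (ha_imp b c) = ha_meet a (ha_imp (ha_meet a b) (ha_meet a c)).
Proof.
apply ha_le_antisym; apply lexI; try apply leIl; apply le_impI.
- apply lexI; [eapply ha_le_trans; [apply leIl | apply leIl] |].
  eapply ha_le_trans; [|apply (modus_ponens b)].
  apply lexI; [eapply ha_le_trans; [apply leIl | apply leIr]
              | eapply ha_le_trans; [apply leIr | apply leIr]].
- eapply ha_le_trans; [|apply (leIr a c)].
  eapply ha_le_trans; [|apply (modus_ponens (ha_meet a b))].
  apply lexI; [eapply ha_le_trans; [apply leIl | apply leIr] |].
  apply lexI; [eapply ha_le_trans; [apply leIl | apply leIl] | apply leIr].
Qed.

End HeytingLattice.

Section Downset.
Variables (A : HeytingAlgebra) (a : A).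

Definition downset := {h : A | ha_le h a}.

Lemma downset_eq (u v : downset) : proj1_sig u = proj1_sig v -> u = v.
Proof. destruct u, v; simpl; intros ->; f_equal; apply proof_irrelevance. Qed.

Definition downset_ha : HeytingAlgebra.
Proof.
refine (@Build_HeytingAlgebra downset
  (fun u v => ha_le (proj1_sig u) (proj1_sig v))
  (exist (fun h => ha_le h a) a (ha_le_refl A a))
  (exist (fun h => ha_le h a) ha_bot (ha_bot_min A a))
  (fun u v => exist (fun h => ha_le h a) (ha_meet (proj1_sig u) (proj1_sig v))
                      (ha_le_trans A _ _ _ (leIl _ _) (proj2_sig u)))
  (fun u v => exist (fun h => ha_le h a) (ha_join (proj1_sig u) (proj1_sig v))
                      (leUx _ _ _ (proj2_sig u) (proj2_sig v)))
  (fun u v => exist (fun h => ha_le h a) (ha_meet a (ha_imp (proj1_sig u) (proj1_sig v)))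
                      (leIl _ _))
  _ _ _ _ _ _ _ _); simpl.
- intros; apply ha_le_refl.
- intros; eapply ha_le_trans; eauto.
- intros; apply downset_eq, ha_le_antisym; auto.
- intros [u Hu]; exact Hu.
- intros; apply ha_bot_min.
- intros; apply ha_meet_glb.
- intros; apply ha_join_lub.
- intros [u Hu] [v Hv] [w Hw]; simpl; split; intro Hle.
  + apply lexI; [exact Hw | apply le_impI, Hle].
  + apply ha_imp_adj. eapply ha_le_trans; [exact Hle | apply leIr].
Defined.

Definition restrict (h : A) : downset_ha := exist (fun z => ha_le z a) (ha_meet a h) (leIl _ _).

Lemma restrict_morphism : ha_morphism restrict.
Proof.
unfold restrict; repeat split; intros; apply downset_eq; simpl.
- apply meet_l, ha_top_max.
- apply ha_le_antisym; [apply leIr | apply ha_bot_min].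
- apply ha_le_antisym.
  + apply lexI; apply lexI;
      solve [apply leIl | eapply ha_le_trans; [apply leIr | apply leIl || apply leIr]].
  + apply lexI; [eapply ha_le_trans; [apply leIl | apply leIl] |].
    apply lexI; [eapply ha_le_trans; [apply leIl | apply leIr]
                | eapply ha_le_trans; [apply leIr | apply leIr]].
- apply meetUr.
- apply meet_imp_relative.
Qed.

End Downset.

Arguments restrict {A} a h.
Arguments downset_eq {A a} u v.

Lemma morphism_comp {A B C : HeytingAlgebra} {f : A -> B} {g : B -> C} :
  ha_morphism f -> ha_morphism g -> ha_morphism (fun z => g (f z)).
Proof.
intros (f1 & f2 & f3 & f4 & f5) (g1 & g2 & g3 & g4 & g5).
repeat split; intros;
  [rewrite f1, g1 | rewrite f2, g2 | rewrite f3, g3 | rewrite f4, g4 | rewrite f5, g5];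
  reflexivity.
Qed.

Lemma morphism_le {A B : HeytingAlgebra} {f : A -> B} {p q : A} :
  ha_morphism f -> ha_le p q -> ha_le (f p) (f q).
Proof. intros (_ & _ & fI & _) Hpq. rewrite <- (meet_l _ _ Hpq), fI. apply leIr. Qed.

Section Coproduct.
Context {H Hx : HeytingAlgebra} {i : H -> Hx} {x : Hx}.
Hypothesis coprod : is_coproduct_free1 i x.

(* Uniqueness in the coproduct, applied in the down-set of c. *)
Lemma coproduct_eq_below (K : HeytingAlgebra) (e1 e2 : Hx -> K) (c : K) :
  ha_morphism e1 -> ha_morphism e2 ->
  (forall h, ha_meet c (e1 (i h)) = ha_meet c (e2 (i h))) ->
  ha_meet c (e1 x) = ha_meet c (e2 x) ->
  forall y, ha_meet c (e1 y) = ha_meet c (e2 y).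
Proof.
intros He1 He2 Hagree_i Hagree_x y.
destruct coprod as [imorph univ].
assert (Hr : ha_morphism (restrict c)) by apply restrict_morphism.
destruct (univ (downset_ha K c) (fun h => restrict c (e1 (i h))) (restrict c (e1 x))
            (morphism_comp (morphism_comp imorph He1) Hr)) as [_ uniq].
refine (f_equal (@proj1_sig _ _)
          (uniq (fun z => restrict c (e1 z)) (fun z => restrict c (e2 z))
                (morphism_comp He1 Hr) (fun h => eq_refl) eq_refl
                (morphism_comp He2 Hr) _ _ y)).
- intro h; apply downset_eq, eq_sym, Hagree_i.
- apply downset_eq, eq_sym, Hagree_x.
Qed.

Lemma subst_exists (h : H) : exists e, is_subst i x h e.
Proof.
assert (Hid : ha_morphism (fun z : H => z)) by (repeat split).
destruct (proj2 coprod H (fun z => z) h Hid) as [[e (He & Hei & Hex)] _].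
exists e; exact (conj He (conj Hei Hex)).
Qed.

Section ExistentialQuantifier.
Context {ex : Hx -> H}.
Hypothesis ex_adj : forall (p : Hx) (h : H), ha_le (ex p) h <-> ha_le p (i h).

Lemma subst_le_ex {h : H} {e : Hx -> H} {p : Hx} :
  is_subst i x h e -> ha_le (e p) (ex p).
Proof.
intros (He & Hei & _). rewrite <- (Hei (ex p)).
apply morphism_le; [exact He | apply ex_adj, ha_le_refl].
Qed.

Lemma postfixed_le_ex {p : Hx} {h : H} {e : Hx -> H} :
  is_subst i x h e -> ha_le h (e p) -> ha_le h (ex (ha_meet x (ha_imp x p))).
Proof.
intros Hs Hle. eapply ha_le_trans; [|apply (subst_le_ex Hs)].
destruct Hs as ((_ & _ & eI & _ & eImp) & _ & Hex).
rewrite eI, eImp, Hex. apply lexI; [apply ha_le_refl | apply le_impI].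
eapply ha_le_trans; [apply leIl | exact Hle].
Qed.

(* Below q the generator x and i h agree (both are q), so substituting h for x
   does not change anything below q. *)
Lemma ex_le_subst {p : Hx} {h : H} {e : Hx -> H} :
  ha_le (ex (ha_meet x (ha_imp x p))) h -> is_subst i x h e ->
  ha_le (ex (ha_meet x (ha_imp x p))) (e p).
Proof.
set (q := ha_meet x (ha_imp x p)). intros Hgh (He & Hei & Hex).
destruct coprod as [imorph _].
assert (Hqi : ha_le q (i h)).
{ eapply ha_le_trans; [apply ex_adj, ha_le_refl | exact (morphism_le imorph Hgh)]. }
assert (Hqx : ha_le q x) by apply leIl.
assert (Hqp : ha_le q p).
{ eapply ha_le_trans; [|apply (modus_ponens x p)]. apply lexI; [apply leIr | apply leIl]. }
assert (Hid : ha_morphism (fun z : Hx => z)) by (repeat split).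
assert (Hxq : ha_meet q x = ha_meet q (i (e x))).
{ rewrite Hex, (meet_l _ _ Hqx), (meet_l _ _ Hqi). reflexivity. }
assert (Hbelow := coproduct_eq_below Hx (fun z => z) (fun z => i (e z)) q
                    Hid (morphism_comp He imorph)
                    (fun h' => f_equal (fun z => ha_meet q (i z)) (eq_sym (Hei h')))
                    Hxq p).
apply ex_adj. rewrite <- (meet_l _ _ Hqp), Hbelow. apply leIr.
Qed.

End ExistentialQuantifier.
End Coproduct.

Theorem mainTheorem9 (H Hx : HeytingAlgebra) (i : H -> Hx) (x : Hx)
  (ex : Hx -> H) (f : Hx) :
  finitely_presented H ->
  is_coproduct_free1 i x ->
  (forall (p : Hx) (h : H), ha_le (ex p) h <-> ha_le p (i h)) ->
  monotone_poly i x f ->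
  let g := ex (ha_meet x (ha_imp x f)) in
  (forall e, is_subst i x g e -> e f = g) /\
  (forall (h : H) e, is_subst i x h e -> e f = h -> ha_le h g).
Proof.
intros _ coprod ex_adj mono g.
split.
- intros e Hs.
  assert (Hg : ha_le g (e f))
    by exact (ex_le_subst coprod ex_adj (ha_le_refl H g) Hs).
  destruct (subst_exists coprod (e f)) as [e' Hs'].
  apply ha_le_antisym; [|exact Hg].
  exact (postfixed_le_ex ex_adj Hs' (mono _ _ Hg _ _ Hs Hs')).
- intros h e Hs Hfix.
  apply (postfixed_le_ex ex_adj Hs). rewrite Hfix; apply ha_le_refl.
Qed.
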